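(* Fix $n\ge1$ and order the compositions of $n$ first by increasing length and then, among compositions of equal length, lexicographically. For each composition $J$ of $n$ let $$U_J=\sum_{\sigma\in\mathfrak S_n,\ \mathrm{SC}(\sigma)=\overline{J}^{\sim}}F_{\mathrm{RC}(\sigma)}\in QSym.$$ Then the transition matrix $M_n$, whose column indexed by $J$ gives the coefficients of $U_J$ in the fundamental basis $(F_I)$, is upper unitriangular: $U_J=F_J+\sum_{I<J}m_{I,J}F_I$ for some integers $m_{I,J}$.
   Context: Permutations are words $\sigma_1\cdots\sigma_n$. A word $a_1\cdots a_m$ is initially dominated if $a_1>a_j$ for all $j\ge2$; every permutation factors uniquely as $\sigma=u_1\cdots u_r$ into initially dominated words with increasing first letters, and $\mathrm{SC}(\sigma)=(|u_1|,\ldots,|u_r|)$ is its saillance composition. For a composition $I=(i_1,\ldots,i_r)$ of $n$, $\mathrm{Des}(I)=\{i_1,i_1+i_2,\ldots,i_1+\cdots+i_{r-1}\}$, and $\overline{I}^{\sim}$ denotes the composition of $n$ whose descent set is $\{1,\ldots,n-1\}\setminus\mathrm{Des}(I)$. The recoil composition $\mathrm{RC}(\sigma)$ is the composition of $n$ whose descent set is the set of recoils $\{i: i+1 \text{ appears to the left of } i \text{ in } \sigma\}$. $F_I$ denotes Gessel's fundamental quasi-symmetric function. *)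

From mathcomp Require Import all_boot all_fingroup.
Set Implicit Arguments. Unset Strict Implicit. Unset Printing Implicit Defensive.

(* Letters of a permutation are 0-based: sigma_j is represented by val (s j),
   with values in {0,...,n-1}; only relative order of letters matters. *)
Definition word (n : nat) (s : 'S_n) : seq nat := [seq val (s i) | i <- enum 'I_n].

Definition is_comp (n : nat) (I : seq nat) : bool :=
  all (fun x => 0 < x) I && (sumn I == n).

Definition Des (I : seq nat) : seq nat := take (size I).-1 (scanl addn 0 I).

(* The composition of n whose descent set is the increasing list D
   (D a sorted sublist of 1..n-1). *)
Definition comp_of_des (n : nat) (D : seq nat) : seq nat :=
  pairmap (fun a b => b - a) 0 (D ++ [:: n]).

(* \overline{J}^~ : descent set is the complement of Des J in {1,...,n-1} *)
Definition compl_comp (n : nat) (J : seq nat) : seq nat :=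
  comp_of_des n [seq i <- iota 1 n.-1 | i \notin Des J].

(* Recoils: i in {1..n-1} such that i+1 appears left of i (1-based values);
   in 0-based letters: letter i appears left of letter i-1. *)
Definition recoils (n : nat) (s : 'S_n) : seq nat :=
  [seq i <- iota 1 n.-1 | index i (word s) < index i.-1 (word s)].

Definition RC (n : nat) (s : 'S_n) : seq nat := comp_of_des n (recoils s).

Definition init_dom (w : seq nat) : bool :=
  if w is a :: t then all (fun b => b < a) t else false.

Definition saillance_fact (us : seq (seq nat)) : bool :=
  all init_dom us && sorted ltn (map (head 0) us).

(* SC(s) = K : cutting the word of s according to K yields the (unique)
   saillance factorization *)
Definition SC_is (n : nat) (s : 'S_n) (K : seq nat) : bool :=
  is_comp n K && saillance_fact (reshape K (word s)).

Fixpoint lexlt (s t : seq nat) : bool :=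
  match s, t with
  | x :: s', y :: t' => (x < y) || ((x == y) && lexlt s' t')
  | [::], _ :: _ => true
  | _, _ => false
  end.

Definition compLt (I J : seq nat) : bool :=
  (size I < size J) || ((size I == size J) && lexlt I J).

(* coefficient of F_I in U_J = sum_{SC(s) = \bar J^~} F_{RC(s)} *)
Definition Mcoef (n : nat) (I J : seq nat) : nat :=
  #|[set s : 'S_n | SC_is s (compl_comp n J) && (RC s == I)]|.

(* Let [w] be a permutation word whose saillance factorization has shape
   [K = \overline{J}^~], so that the cuts of [K] are the points of
   [{1, ..., n-1}] outside [Des J].  At a cut [j] every earlier letter is
   smaller than [w_j]; hence the successor [m] of the largest of the first [j]
   letters is a letter of [w] placed after [m - 1], i.e. not a recoil, and
   [m >= j].  Distinct cuts give distinct such [m], so [w] has at most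
   [|Des J|] recoils and [RC w] is at most as long as [J].  When the lengths
   agree, the recoils are exactly the letters that are not such an [m], and
   since [m >= j] their prefix counts dominate those of [Des J]: at the first
   point where the two sets differ the recoil set has the extra element, so
   [RC w] is lexicographically smaller than [J].  Finally, if [RC w = J] then
   [m = j] at every cut, so each block of [K] is an interval of values whose
   inner letters are all recoils, i.e. it is written in decreasing order; this
   determines [w], and the word of decreasing runs of shape [K] is such a word. *)

From mathcomp Require Import all_boot all_fingroup.
From mathcomp Require Import zify.
Set Implicit Arguments. Unset Strict Implicit. Unset Printing Implicit Defensive.

Lemma mem_iota1 n i : (i \in iota 1 n.-1) = (0 < i < n).
Proof. by rewrite mem_iota; lia. Qed.

Lemma iota1_split t : 0 < t -> iota 1 t = iota 1 t.-1 ++ [:: t].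
Proof. by case: t => // t _; rewrite -[in LHS](addn1 t) iotaD add1n. Qed.

Lemma rev_iotaS a k : rev (iota a k.+1) = (a + k) :: rev (iota a k).
Proof. by rewrite -addn1 iotaD rev_cat. Qed.

Lemma index_rev_iota a k x :
  a <= x < a + k -> index x (rev (iota a k)) = a + k.-1 - x.
Proof.
move=> x_range; have lt_k : a + k.-1 - x < k by lia.
have def_x : nth 0 (rev (iota a k)) (a + k.-1 - x) = x.
  by rewrite nth_rev size_iota // nth_iota; lia.
by rewrite -{1}def_x index_uniq ?size_rev ?size_iota ?rev_uniq ?iota_uniq.
Qed.

Lemma path_leq_last x s : path leq x s -> x <= last x s.
Proof. by elim: s x => //= y s IHs x /andP[le_xy /IHs]; apply: leq_trans. Qed.

Lemma sumn_pairmap_subn x s :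
  path leq x s -> sumn (pairmap (fun a b => b - a) x s) = last x s - x.
Proof.
elim: s x => [|y s IHs] x /=; first by rewrite subnn.
by case/andP=> le_xy s_path; rewrite IHs //; have := path_leq_last s_path; lia.
Qed.

Lemma scanl_pairmap_subn x s :
  path leq x s -> scanl addn x (pairmap (fun a b => b - a) x s) = s.
Proof.
by elim: s x => [|y s IHs] x //= /andP[le_xy /IHs]; rewrite subnKC // => ->.
Qed.

Lemma all_pos_pairmap_subn x s :
  path ltn x s -> all (fun k => 0 < k) (pairmap (fun a b => b - a) x s).
Proof.
elim: s x => [|y s IHs] x //= /andP[lt_xy /IHs all_pos].
by apply/andP; split; first lia.
Qed.

Lemma path_scanl_addn x s :
  all (fun k => 0 < k) s -> path ltn x (scanl addn x s).
Proof.
elim: s x => [|k s IHs] x //= /andP[k_gt0 /IHs ->].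
by rewrite andbT -addn1 leq_add2l.
Qed.

Lemma scanl_addn_shift k m s :
  scanl addn (k + m) s = map (addn k) (scanl addn m s).
Proof. by elim: s m => [|y s IHs] m //=; rewrite -addnA IHs. Qed.

Lemma path_filter_iota1 n (P : pred nat) :
  0 < n -> path ltn 0 ([seq i <- iota 1 n.-1 | P i] ++ [:: n]).
Proof.
move=> n_gt0; rewrite -[path _ _ _]/(sorted ltn (0 :: _)).
apply: (subseq_sorted ltn_trans (s2 := iota 0 n.+1)); last exact: iota_ltn_sorted.
have -> : iota 0 n.+1 = 0 :: iota 1 n.-1 ++ [:: n].
  by case: n n_gt0 => // m _; rewrite -(addn1 m.+1) iotaD.
by rewrite /= cat_subseq ?filter_subseq.
Qed.

Lemma bigmax_seq_mem (s : seq nat) : s != [::] -> \max_(x <- s) x \in s.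
Proof.
elim: s => [|y s IHs] // _; rewrite big_cons inE /= /maxn.
case: ltnP => [lt_y_max|_]; last by rewrite eqxx.
by rewrite IHs ?orbT //; apply: contraTneq lt_y_max => ->; rewrite big_nil.
Qed.

Lemma count_mem_uniqC (T : eqType) (s t : seq T) :
  uniq s -> uniq t -> count (mem s) t = count (mem t) s.
Proof.
move=> s_uniq t_uniq; rewrite -!size_filter.
apply/perm_size/uniq_perm; try exact: filter_uniq.
by move=> x; rewrite !mem_filter andbC.
Qed.

Lemma sub_in_count (T : eqType) (a b : pred T) s :
  {in s, subpred a b} -> count a s <= count b s.
Proof.
elim: s => [|x s IHs] //= sub_ab; apply: leq_add.
  by case ax: (a x) => //; rewrite (sub_ab x (mem_head _ _) ax).
by apply: IHs => y y_s; apply: sub_ab; rewrite inE y_s orbT.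
Qed.

Lemma count_predC_size (T : Type) (a : pred T) s :
  count (predC a) s = size s - count a s.
Proof. by rewrite -(count_predC a s) addKn. Qed.

Lemma sub_count_eq (T : eqType) (a b : pred T) s :
  subpred a b -> count a s = count b s -> {in s, a =1 b}.
Proof.
move=> sub_ab; elim: s => [|y s IHs] //= eq_count x.
have le_s := sub_count sub_ab s.
have [eq_y eq_s] : a y = b y /\ count a s = count b s.
  case ay: (a y) eq_count; first by rewrite (sub_ab _ ay) => -[].
  by case: (b y) => /= eq_count; lia.
by rewrite inE => /orP[/eqP -> //|/IHs]; apply.
Qed.

(** * Descent sets and compositions *)

Section DescentSets.

Variables (n : nat) (D : seq nat).
Hypothesis D_path : path ltn 0 (D ++ [:: n]).

Let D_path_leq : path leq 0 (D ++ [:: n]).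
Proof. by apply: sub_path D_path => a b /ltnW. Qed.

Lemma Des_comp_of_des : Des (comp_of_des n D) = D.
Proof.
rewrite /Des /comp_of_des size_pairmap size_cat addn1.
by rewrite (scanl_pairmap_subn D_path_leq) take_size_cat.
Qed.

Lemma comp_of_des_is_comp : is_comp n (comp_of_des n D).
Proof.
rewrite /is_comp /comp_of_des (sumn_pairmap_subn D_path_leq) last_cat subn0.
by rewrite eqxx andbT all_pos_pairmap_subn.
Qed.

Lemma sorted_in_range : sorted ltn D /\ {in D, forall x, 0 < x < n}.
Proof.
move: D_path; rewrite -[path _ _ _]/(sorted ltn (0 :: _)) (sorted_pairwise ltn_trans).
rewrite pairwise_cons pairwise_cat allrel1r all_cat -(sorted_pairwise ltn_trans).
case/andP=> /andP[D_pos _] /and3P[D_lt_n sorted_D _]; split=> // x xD.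
by have := allP D_pos x xD; have := allP D_lt_n x xD; rewrite /=; lia.
Qed.

Lemma filter_iota1_mem : [seq i <- iota 1 n.-1 | i \in D] = D.
Proof.
have [sorted_D D_range] := sorted_in_range.
apply: (irr_sorted_eq ltn_trans ltnn).
- exact/(subseq_sorted ltn_trans (filter_subseq _ _))/iota_ltn_sorted.
- exact: sorted_D.
move=> x; rewrite mem_filter mem_iota1.
by case: (boolP (x \in D)) => // xD; rewrite (D_range x xD).
Qed.

End DescentSets.

Lemma size_comp_of_des n D : size (comp_of_des n D) = (size D).+1.
Proof. by rewrite /comp_of_des size_pairmap size_cat addn1. Qed.

Section Compositions.

Variables (n : nat) (J : seq nat).
Hypotheses (n_gt0 : 0 < n) (J_comp : is_comp n J).

Lemma scanl_Des : scanl addn 0 J = Des J ++ [:: n].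
Proof.
move: J_comp n_gt0; case/lastP: J => [/andP[_ /eqP <-] //|K k /andP[_ /eqP <-] _].
rewrite /Des scanl_rcons size_rcons -cats1 take_size_cat ?size_scanl //.
by rewrite (foldl_foldr addnA addnC).
Qed.

Lemma Des_path : path ltn 0 (Des J ++ [:: n]).
Proof.
by rewrite -scanl_Des; case/andP: J_comp => /path_scanl_addn.
Qed.

Lemma comp_of_desK : comp_of_des n (Des J) = J.
Proof. by rewrite /comp_of_des -scanl_Des; apply: scanlK => a b; rewrite addKn. Qed.

End Compositions.

Lemma Des_compl_comp n J :
  0 < n -> Des (compl_comp n J) = [seq i <- iota 1 n.-1 | i \notin Des J].
Proof. by move=> n_gt0; rewrite Des_comp_of_des ?path_filter_iota1. Qed.

Lemma compl_comp_is_comp n J : 0 < n -> is_comp n (compl_comp n J).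
Proof. by move=> n_gt0; rewrite comp_of_des_is_comp ?path_filter_iota1. Qed.

Lemma mem_Des_range n J j : is_comp n J -> j \in Des J -> 0 < j < n.
Proof.
move=> J_comp; have [n0|n_gt0] := posnP n; last first.
  by have [_] := sorted_in_range (Des_path n_gt0 J_comp); apply.
by case: J J_comp => [|k K] // /andP[/andP[k_gt0 _] /eqP /=]; lia.
Qed.

Lemma Des_cons k K :
  Des (k :: K) = if K is [::] then [::] else k :: map (addn k) (Des K).
Proof.
case: K => [|x K] //; rewrite /Des /= add0n map_take.
by have := scanl_addn_shift k 0 (x :: K); rewrite addn0 /= => ->.
Qed.

Lemma Des_cons_lt k K x : x < k -> x \notin Des (k :: K).
Proof.
rewrite Des_cons; case: K => // y K lt_xk; rewrite inE negb_or ltn_eqF //=.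
by apply/mapP => -[z _ def_x]; move: lt_xk; rewrite def_x; lia.
Qed.

Lemma Des_cons_head k K : K != [::] -> k \in Des (k :: K).
Proof. by rewrite Des_cons; case: K => // y K _; rewrite mem_head. Qed.

Lemma Des_cons_gt k K x : k < x -> (x \in Des (k :: K)) = (x - k \in Des K).
Proof.
rewrite Des_cons; case: K => // y K lt_kx; rewrite inE gtn_eqF //=.
apply/mapP/idP => [[z z_Des ->]|x_Des]; first by rewrite addKn.
by exists (x - k); rewrite // subnKC // ltnW.
Qed.

(** * Lexicographic order *)

Lemma lexlt_catl p s t : lexlt (p ++ s) (p ++ t) = lexlt s t.
Proof. by elim: p => //= x p ->; rewrite ltnn eqxx. Qed.

Lemma lexlt_comp_of_des_first_diff n (P Q : pred nat) t :
  0 < t < n -> P t -> ~~ Q t -> {in iota 1 t.-1, P =1 Q} ->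
  lexlt (comp_of_des n [seq i <- iota 1 n.-1 | P i])
        (comp_of_des n [seq i <- iota 1 n.-1 | Q i]).
Proof.
move=> /andP[t_gt0 t_lt_n] Pt nQt PQ.
have -> : iota 1 n.-1 = iota 1 t.-1 ++ t :: iota t.+1 (n.-1 - t).
  rewrite -cat_rcons -cats1 -iota1_split // -[t.+1](add1n t) -iotaD.
  by congr iota; lia.
rewrite !filter_cat /= Pt (negPf nQt) (eq_in_filter PQ).
rewrite /comp_of_des -!catA !pairmap_cat lexlt_catl.
set c := [seq i <- iota 1 t.-1 | Q i].
have last_c : last 0 c < t.
  have := mem_last 0 c; rewrite inE mem_filter mem_iota.
  by case/orP=> [/eqP -> //|/andP[_ /andP[_ lt_c]]]; apply: leq_trans lt_c _; lia.
case def_r : [seq i <- iota t.+1 (n.-1 - t) | Q i] => [|y r] /=; first lia.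
have : y \in [seq i <- iota t.+1 (n.-1 - t) | Q i] by rewrite def_r mem_head.
by rewrite mem_filter mem_iota => /andP[_]; lia.
Qed.

Lemma lexlt_comp_of_des_count n (P Q : pred nat) :
  (forall x, x < n -> count Q (iota 1 x) <= count P (iota 1 x)) ->
  [seq i <- iota 1 n.-1 | P i] != [seq i <- iota 1 n.-1 | Q i] ->
  lexlt (comp_of_des n [seq i <- iota 1 n.-1 | P i])
        (comp_of_des n [seq i <- iota 1 n.-1 | Q i]).
Proof.
move=> count_QP neq_PQ.
have ex_diff : exists t, (0 < t < n) && (P t != Q t).
  have /hasP[t] : has (fun t => P t != Q t) (iota 1 n.-1).
    apply: contraNT neq_PQ => /hasPn same; apply/eqP/eq_in_filter => i /same.
    by case: (P i) (Q i) => [] [].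
  by rewrite mem_iota1 => t_range diff_t; exists t; rewrite t_range.
case: (ex_minnP ex_diff) => t /andP[/andP[t_gt0 t_lt_n] diff_t] t_min.
have same_below : {in iota 1 t.-1, P =1 Q}.
  move=> i; rewrite mem_iota => i_range; apply/eqP; apply: contraTT isT => diff_i.
  by have := t_min i; rewrite diff_i andbT; lia.
have := count_QP t t_lt_n; rewrite iota1_split // !count_cat (eq_in_count same_below).
rewrite leq_add2l /= !addn0 => le_QP.
have [Pt nQt] : P t /\ ~~ Q t by move: diff_t le_QP; case: (P t) (Q t) => [] [].
by apply: (lexlt_comp_of_des_first_diff (t := t)); rewrite ?t_gt0.
Qed.

(** * Saillance factorizations *)

Lemma init_dom_head_max u x : init_dom u -> x \in u -> x <= head 0 u.
Proof.
by case: u => [|a t] //= /allP lt_a; rewrite inE => /orP[/eqP -> //|/lt_a/ltnW].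
Qed.

Lemma saillance_fact_cons u us :
  saillance_fact (u :: us) =
  [&& init_dom u, all (ltn (head 0 u)) (map (head 0) us) & saillance_fact us].
Proof.
rewrite /saillance_fact /= (path_sortedE ltn_trans).
by case: (init_dom u) (all init_dom us) => [] [] //=; rewrite andbF.
Qed.

Lemma saillance_prefix_lt K w :
  is_comp (size w) K -> saillance_fact (reshape K w) ->
  forall j, j \in Des K -> {in take j w, forall x, x < nth 0 w j}.
Proof.
elim: K w => [|k K IHK] w // k_comp.
have [k_gt0 K_comp] : 0 < k /\ is_comp (size (drop k w)) K.
  case/andP: k_comp => /andP[k_gt0 K_pos] /eqP size_w; split=> //.
  by apply/andP; split; [exact: K_pos | rewrite size_drop -size_w /= addKn].
rewrite [reshape _ _]/= saillance_fact_cons => /and3P[dom_u heads_gt sf_rest] j.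
rewrite Des_cons; case: K {k_comp} IHK K_comp heads_gt sf_rest => // k2 K.
move=> IHK K_comp heads_gt sf_rest.
have {}IHK : forall j', j' \in Des (k2 :: K) ->
    {in take j' (drop k w), forall x, x < nth 0 w (k + j')}.
  by move=> j' j'_Des x x_in; rewrite -nth_drop; apply: IHK x_in.
have le_w0 : {in take k w, forall x, x <= nth 0 w 0}.
  by move=> x /(init_dom_head_max dom_u); rewrite -nth0 nth_take.
have k2_gt0 : 0 < k2 by case/andP: K_comp => /andP[].
have lt_wk : {in take k w, forall x, x < nth 0 w k}.
  move=> x /le_w0 /leq_ltn_trans; apply; move: heads_gt => /= /andP[+ _].
  by rewrite -!nth0 !nth_take // nth_drop addn0.
have wk_lt : forall j', j' \in Des (k2 :: K) -> nth 0 w k < nth 0 w (k + j').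
  move=> j' j'_Des; have /andP[j'_gt0 j'_lt] := mem_Des_range K_comp j'_Des.
  apply: (IHK j' j'_Des (nth 0 w k)).
  have -> : nth 0 w k = nth 0 (take j' (drop k w)) 0.
    by rewrite nth_take // nth_drop addn0.
  by rewrite mem_nth // size_takel // ltnW.
rewrite inE => /orP[/eqP -> //|/mapP[j' j'_Des ->]] x.
rewrite takeD mem_cat => /orP[/lt_wk x_lt|/IHK]; last exact.
exact: ltn_trans x_lt (wk_lt j' j'_Des).
Qed.

(** * Recoils of saillance words *)

Definition perm_word n (w : seq nat) :=
  [/\ uniq w, size w = n & forall v, (v \in w) = (v < n)].

Definition recoil (w : seq nat) i := index i w < index i.-1 w.

Definition cut_letter (w : seq nat) j := (\max_(x <- take j w) x).+1.

Section SaillanceWords.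

Variables (n : nat) (J w : seq nat).
Hypotheses (n_gt0 : 0 < n) (J_comp : is_comp n J) (w_perm : perm_word n w).
Hypothesis w_sail : saillance_fact (reshape (compl_comp n J) w).

(* The cut points of [reshape (compl_comp n J) w], by [Des_compl_comp]. *)
Local Notation cuts := [seq i <- iota 1 n.-1 | i \notin Des J].
Local Notation cut_letters := (map (cut_letter w) cuts).

Let sorted_cuts : sorted ltn cuts.
Proof. exact: (@sorted_filter _ ltn ltn_trans _ _ (iota_ltn_sorted 1 n.-1)). Qed.

Let w_uniq : uniq w. Proof. by case: w_perm. Qed.
Let size_w : size w = n. Proof. by case: w_perm. Qed.
Let mem_w v : (v \in w) = (v < n). Proof. by case: w_perm. Qed.

Lemma mem_cuts j : (j \in cuts) = (0 < j < n) && (j \notin Des J).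
Proof. by rewrite mem_filter mem_iota1 andbC. Qed.

Lemma cut_prefix_lt j : j \in cuts -> {in take j w, forall x, x < nth 0 w j}.
Proof.
rewrite -Des_compl_comp //; apply: (saillance_prefix_lt _ w_sail).
by rewrite size_w compl_comp_is_comp.
Qed.

Section Cut.

Variable j : nat.
Hypothesis j_cut : j \in cuts.

Let j_range : 0 < j < n.
Proof. by move: j_cut; rewrite mem_cuts => /andP[]. Qed.

Let size_prefix : size (take j w) = j.
Proof. by rewrite size_takel // size_w ltnW; case/andP: j_range. Qed.

Lemma cut_prefix_max_mem : \max_(x <- take j w) x \in take j w.
Proof.
by apply: bigmax_seq_mem; rewrite -size_eq0 size_prefix -lt0n; case/andP: j_range.
Qed.

Lemma cut_prefix_max_lt : \max_(x <- take j w) x < nth 0 w j.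
Proof. exact: cut_prefix_lt j_cut _ cut_prefix_max_mem. Qed.

Lemma cut_letter_ge : j <= cut_letter w j.
Proof.
rewrite -{1}size_prefix -(size_iota 0 (cut_letter w j)); apply: uniq_leq_size.
  exact: take_uniq.
by move=> x x_in; rewrite mem_iota ltnS leq_bigmax_seq.
Qed.

Lemma cut_letter_lt : cut_letter w j < n.
Proof.
apply: leq_ltn_trans cut_prefix_max_lt _.
by rewrite -mem_w mem_nth // size_w; case/andP: j_range.
Qed.

Lemma cut_letter_not_recoil : ~~ recoil w (cut_letter w j).
Proof.
rewrite /recoil /cut_letter /= -leqNgt; set m := \max_(x <- take j w) x.
have m_in_w : m \in w := mem_take cut_prefix_max_mem.
have m_before : index m w < j.
  by rewrite -(in_take _ m_in_w); exact: cut_prefix_max_mem.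
have m1_after : j <= index m.+1 w.
  rewrite leqNgt -in_take ?mem_w ?cut_letter_lt //; apply/negP => m1_in.
  by have : m.+1 <= m := leq_bigmax_seq _ m1_in isT; rewrite ltnn.
exact: leq_trans (ltnW m_before) m1_after.
Qed.

End Cut.

Lemma cut_letter_mono : {in cuts &, {homo cut_letter w : j j' / j < j'}}.
Proof.
move=> j j' j_cut j'_cut lt_jj'; rewrite ltnS.
have wj_in : nth 0 w j \in take j' w.
  rewrite -(nth_take _ lt_jj') mem_nth // size_takel // size_w ltnW //.
  by move: j'_cut; rewrite mem_cuts => /andP[/andP[]].
exact: leq_trans (cut_prefix_max_lt j_cut) (leq_bigmax_seq _ wj_in isT).
Qed.

Lemma sorted_cut_letters : sorted ltn cut_letters.
Proof.
by apply: homo_sorted_in cut_letter_mono _ sorted_cuts; apply/allP.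
Qed.

Let uniq_cuts : uniq cuts. Proof. exact: filter_uniq (iota_uniq 1 n.-1). Qed.
Let uniq_cut_letters : uniq cut_letters.
Proof. exact: (sorted_uniq ltn_trans ltnn sorted_cut_letters). Qed.

Lemma cut_letters_not_recoil : {in cut_letters, forall i, ~~ recoil w i}.
Proof. by move=> _ /mapP[j j_cut ->]; apply: cut_letter_not_recoil. Qed.

Lemma cut_letters_sub_iota1 : {subset cut_letters <= iota 1 n.-1}.
Proof. by move=> _ /mapP[j j_cut ->]; rewrite mem_iota1 cut_letter_lt. Qed.

Lemma count_cut_letters_prefix x :
  count (mem cut_letters) (iota 1 x) <= count (mem cuts) (iota 1 x).
Proof.
rewrite (count_mem_uniqC uniq_cut_letters) ?(count_mem_uniqC uniq_cuts) ?iota_uniq //.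
rewrite count_map; apply: sub_in_count => j j_cut; rewrite /= !mem_iota.
by have := cut_letter_ge j_cut; move: j_cut; rewrite mem_cuts => /andP[]; lia.
Qed.

Lemma count_cut_letters :
  count (mem cut_letters) (iota 1 n.-1) = count (mem cuts) (iota 1 n.-1).
Proof.
rewrite (count_mem_uniqC uniq_cut_letters) ?(count_mem_uniqC uniq_cuts) ?iota_uniq //.
rewrite count_map; apply: eq_in_count => j j_cut /=.
by rewrite cut_letters_sub_iota1 ?map_f // (mem_subseq (filter_subseq _ _) j_cut).
Qed.

Lemma count_Des_iota1 x : x <= n.-1 ->
  count (mem (Des J)) (iota 1 x) = x - count (mem cuts) (iota 1 x).
Proof.
move=> le_xn.
have -> : count (mem cuts) (iota 1 x) = count (predC (mem (Des J))) (iota 1 x).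
  apply: eq_in_count => i; rewrite mem_iota => i_range /=.
  by rewrite mem_cuts (_ : 0 < i < n) //; lia.
by rewrite -[X in X - _](size_iota 1 x) -(count_predC (mem (Des J))) addnK.
Qed.

Let recoil_sub : subpred (recoil w) (predC (mem cut_letters)).
Proof. by move=> i rec_i; apply/negP => /cut_letters_not_recoil; rewrite rec_i. Qed.

Lemma count_recoil_le :
  count (recoil w) (iota 1 n.-1) <= count (mem (Des J)) (iota 1 n.-1).
Proof.
rewrite count_Des_iota1 // -count_cut_letters -[X in X - _](size_iota 1 n.-1).
rewrite -count_predC_size.
exact: sub_count recoil_sub _.
Qed.

Section MaximalRecoils.

Hypothesis count_recoil_eq :
  count (recoil w) (iota 1 n.-1) = count (mem (Des J)) (iota 1 n.-1).

Lemma recoil_off_cut_letters :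
  {in iota 1 n.-1, recoil w =1 predC (mem cut_letters)}.
Proof.
apply: sub_count_eq recoil_sub _.
rewrite count_recoil_eq count_Des_iota1 // -count_cut_letters.
by rewrite count_predC_size size_iota.
Qed.

Lemma count_recoil_prefix x : x < n ->
  count (mem (Des J)) (iota 1 x) <= count (recoil w) (iota 1 x).
Proof.
move=> lt_xn; have le_xn : x <= n.-1 by lia.
rewrite count_Des_iota1 //.
rewrite (eq_in_count (a1 := recoil w) (a2 := predC (mem cut_letters))).
  by rewrite count_predC_size size_iota leq_sub2l // count_cut_letters_prefix.
move=> i i_in; apply: recoil_off_cut_letters.
by move: i_in; rewrite mem_iota1 mem_iota; lia.
Qed.

End MaximalRecoils.

Lemma comp_of_recoils_compLt :
  comp_of_des n [seq i <- iota 1 n.-1 | recoil w i] != J ->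
  compLt (comp_of_des n [seq i <- iota 1 n.-1 | recoil w i]) J.
Proof.
have def_J : J = comp_of_des n [seq i <- iota 1 n.-1 | i \in Des J].
  by rewrite filter_iota1_mem ?comp_of_desK ?Des_path.
rewrite [in X in compLt _ X]def_J /compLt !size_comp_of_des !size_filter.
rewrite ltnS eqSS => neq_J.
have := count_recoil_le; rewrite leq_eqVlt => /orP[/eqP count_eq|->] //.
rewrite count_eq ltnn eqxx /=; apply: lexlt_comp_of_des_count.
  exact: count_recoil_prefix.
by apply: contra_neq neq_J => ->.
Qed.

Section RecoilsDes.

Hypothesis recoils_Des : [seq i <- iota 1 n.-1 | recoil w i] = Des J.

Let recoil_Des i : i \in iota 1 n.-1 -> recoil w i = (i \in Des J).
Proof. by move=> i_in; rewrite -recoils_Des mem_filter i_in andbT. Qed.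

Let count_recoil_eq :
  count (recoil w) (iota 1 n.-1) = count (mem (Des J)) (iota 1 n.-1).
Proof. exact: eq_in_count recoil_Des. Qed.

Lemma cut_letters_cuts : cut_letters = cuts.
Proof.
apply: (irr_sorted_eq ltn_trans ltnn) sorted_cut_letters sorted_cuts _ => i.
rewrite mem_cuts -mem_iota1; case: (boolP (i \in iota 1 n.-1)) => i_in /=.
  by rewrite -recoil_Des // (recoil_off_cut_letters count_recoil_eq i_in) negbK.
by apply/negP => /cut_letters_sub_iota1; rewrite (negPf i_in).
Qed.

Lemma cut_letter_id j : j \in cuts -> cut_letter w j = j.
Proof.
move=> j_cut; rewrite -{1}(nth_index 0 j_cut) -(nth_map 0 0) ?index_mem //.
by rewrite cut_letters_cuts nth_index.
Qed.

Lemma index_lt_cut j v : j \in cuts -> v < n -> (index v w < j) = (v < j).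
Proof.
move=> j_cut lt_vn; rewrite -in_take ?mem_w //.
have prefix_sub : {subset take j w <= iota 0 j}.
  move=> x x_in; have : x <= \max_(y <- take j w) y := leq_bigmax_seq _ x_in isT.
  by rewrite mem_iota add0n -{2}(cut_letter_id j_cut).
have size_prefix : size (iota 0 j) <= size (take j w).
  by rewrite size_iota size_takel // size_w; move: j_cut; rewrite mem_cuts; lia.
have [_ prefix_iota] := uniq_min_size (take_uniq j w_uniq) prefix_sub size_prefix.
by rewrite prefix_iota mem_iota.
Qed.

Lemma recoil_off_cuts i : 0 < i < n -> i \notin cuts -> recoil w i.
Proof. by move=> i_range; rewrite mem_cuts i_range negbK recoil_Des ?mem_iota1. Qed.

Lemma index_in_block v a b :
  a <= v < b -> b <= n -> (a == 0) || (a \in cuts) -> (b == n) || (b \in cuts) ->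
  (forall i, a < i < b -> i \notin cuts) -> index v w = a + b.-1 - v.
Proof.
move=> /andP[le_av lt_vb] le_bn a_cut b_cut no_cut.
have chain t u : a <= u -> u + t < b -> index (u + t) w + t <= index u w.
  elim: t => [|t IHt] le_au lt_utb; first by rewrite !addn0.
  have step : index (u + t).+1 w < index (u + t) w.
    by apply: recoil_off_cuts; [lia | apply: no_cut; lia].
  have lt_ut_b : u + t < b by lia.
  by rewrite !addnS; apply: leq_trans (IHt le_au lt_ut_b); rewrite -addSn leq_add2r.
have le_a_index_b1 : a <= index b.-1 w.
  case/orP: a_cut => [/eqP -> //|a_cut].
  by rewrite leqNgt index_lt_cut //; lia.
have index_a_lt_b : index a w < b.
  case/orP: b_cut => [/eqP ->|b_cut]; last by rewrite index_lt_cut //; lia.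
  by rewrite -size_w index_mem mem_w; lia.
have := chain (b.-1 - v) v le_av; rewrite (_ : v + (b.-1 - v) = b.-1); last lia.
have := chain (v - a) a (leqnn a); rewrite (_ : a + (v - a) = v); last lia.
lia.
Qed.

End RecoilsDes.

End SaillanceWords.

Lemma block_around (D : seq nat) n v : v < n ->
  exists a b, [/\ a <= v < b, b <= n, (a == 0) || (a \in D), (b == n) || (b \in D)
                & forall i, a < i < b -> i \notin D].
Proof.
move=> lt_vn.
have ex_a : exists a, ((a == 0) || (a \in D)) && (a <= v) by exists 0.
have ub_a : forall a, ((a == 0) || (a \in D)) && (a <= v) -> a <= v by move=> a /andP[].
case: (ex_maxnP ex_a ub_a) => a /andP[a_cut le_av] a_max.
have ex_b : exists b, ((b == n) || (b \in D)) && (v < b) by exists n; rewrite eqxx.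
case: (ex_minnP ex_b) => b /andP[b_cut lt_vb] b_min.
exists a, b; split=> //; first by rewrite le_av.
  by apply: b_min; rewrite eqxx.
move=> i /andP[lt_ai lt_ib]; apply/negP => i_D.
have [le_iv|lt_vi] := leqP i v.
  by have := a_max i; rewrite i_D orbT le_iv => /(_ isT); lia.
by have := b_min i; rewrite i_D orbT lt_vi => /(_ isT); lia.
Qed.

Lemma perm_word_index_inj n w1 w2 : perm_word n w1 -> perm_word n w2 ->
  (forall v, v < n -> index v w1 = index v w2) -> w1 = w2.
Proof.
case=> uniq_w1 size_w1 mem_w1 [uniq_w2 size_w2 mem_w2] same_index.
apply: (@eq_from_nth _ 0); first by rewrite size_w1 size_w2.
move=> i lt_i; have x_lt : nth 0 w1 i < n by rewrite -mem_w1 mem_nth.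
by rewrite -[in RHS](index_uniq 0 lt_i uniq_w1) same_index // nth_index // mem_w2.
Qed.

Lemma saillance_word_unique n J w1 w2 : 0 < n -> is_comp n J ->
  perm_word n w1 -> saillance_fact (reshape (compl_comp n J) w1) ->
  [seq i <- iota 1 n.-1 | recoil w1 i] = Des J ->
  perm_word n w2 -> saillance_fact (reshape (compl_comp n J) w2) ->
  [seq i <- iota 1 n.-1 | recoil w2 i] = Des J ->
  w1 = w2.
Proof.
move=> n_gt0 J_comp w1_perm w1_sail w1_rec w2_perm w2_sail w2_rec.
apply: (perm_word_index_inj w1_perm w2_perm) => v lt_vn.
have [a [b [v_in le_bn a_cut b_cut no_cut]]] :=
  block_around [seq i <- iota 1 n.-1 | i \notin Des J] lt_vn.
have index_w := index_in_block n_gt0 J_comp _ _ _ v_in le_bn a_cut b_cut no_cut.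
by rewrite (index_w w1) ?(index_w w2).
Qed.

(** * The word of decreasing runs *)

Fixpoint decreasing_runs (a : nat) (K : seq nat) : seq (seq nat) :=
  if K is k :: K' then rev (iota a k) :: decreasing_runs (a + k) K' else [::].

Definition runs_word a K := flatten (decreasing_runs a K).

Lemma runs_word_cons a k K :
  runs_word a (k :: K) = rev (iota a k) ++ runs_word (a + k) K.
Proof. by []. Qed.

Lemma perm_runs_word a K : perm_eq (runs_word a K) (iota a (sumn K)).
Proof.
elim: K a => [|k K IHK] a //; rewrite runs_word_cons /= iotaD.
by apply: perm_cat; [rewrite perm_rev | exact: IHK].
Qed.

Lemma reshape_runs_word a K : reshape K (runs_word a K) = decreasing_runs a K.
Proof.
elim: K a => [|k K IHK] a //; rewrite runs_word_cons /=.
by rewrite take_size_cat ?drop_size_cat ?IHK // size_rev size_iota.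
Qed.

Lemma heads_decreasing_runs b K :
  all (fun k => 0 < k) K -> all (leq b) (map (head 0) (decreasing_runs b K)).
Proof.
elim: K b => [|k K IHK] b //= /andP[k_gt0 K_pos]; apply/andP; split.
  by case: k k_gt0 => // k _; rewrite rev_iotaS leq_addr.
by apply: sub_all (IHK _ K_pos) => x /=; apply: leq_trans (leq_addr _ _).
Qed.

Lemma saillance_decreasing_runs a K :
  all (fun k => 0 < k) K -> saillance_fact (decreasing_runs a K).
Proof.
elim: K a => [|k K IHK] a //= /andP[k_gt0 K_pos]; rewrite saillance_fact_cons IHK //.
case: k k_gt0 => // k _; rewrite rev_iotaS /= all_rev andbT; apply/andP; split.
  by apply/allP => x; rewrite mem_iota; lia.
by apply: sub_all (heads_decreasing_runs _ K_pos) => x /=; rewrite addnS.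
Qed.

Lemma recoil_runs_word a K : all (fun k => 0 < k) K ->
  forall i, a < i < a + sumn K -> recoil (runs_word a K) i = (i - a \notin Des K).
Proof.
elim: K a => [|k K IHK] a /=; first by move=> _ i; rewrite addn0; lia.
case/andP=> k_gt0 K_pos i i_range; rewrite /recoil runs_word_cons !index_cat.
rewrite !mem_rev !mem_iota !size_rev !size_iota.
case: (ltngtP i (a + k)) => [lt_i_ak|gt_i_ak|eq_i_ak].
- rewrite ifT; last lia. rewrite ifT; last lia.
  by rewrite !index_rev_iota ?Des_cons_lt; lia.
- rewrite ifF; last lia. rewrite ifF; last lia.
  rewrite ltn_add2l -[_ < _]/(recoil (runs_word (a + k) K) i) IHK //; last lia.
  by rewrite Des_cons_gt ?subnDA //; lia.
- subst i; have K_nil : K != [::] by case: K {IHK K_pos} i_range => //=; lia.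
  rewrite ifF; last lia. rewrite ifT; last lia.
  rewrite index_rev_iota; last lia.
  by rewrite addKn Des_cons_head //; lia.
Qed.

Lemma perm_word_runs_word K : perm_word (sumn K) (runs_word 0 K).
Proof.
have perm_K := perm_runs_word 0 K; split.
- by rewrite (perm_uniq perm_K) iota_uniq.
- by rewrite (perm_size perm_K) size_iota.
- by move=> v; rewrite (perm_mem perm_K) mem_iota.
Qed.

Lemma recoils_runs_word_compl_comp n J : 0 < n -> is_comp n J ->
  [seq i <- iota 1 n.-1 | recoil (runs_word 0 (compl_comp n J)) i] = Des J.
Proof.
move=> n_gt0 J_comp; rewrite -[RHS](filter_iota1_mem (Des_path n_gt0 J_comp)).
have /andP[K_pos /eqP sumn_K] := compl_comp_is_comp J n_gt0.
apply: eq_in_filter => i i_in; rewrite recoil_runs_word // ?add0n ?sumn_K -?mem_iota1 //.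
by rewrite subn0 Des_compl_comp // mem_filter i_in andbT negbK.
Qed.

(** * Permutations as words *)

Lemma perm_word_word n (s : 'S_n) : perm_word n (word s).
Proof.
split.
- by rewrite /word map_inj_uniq ?enum_uniq // => i j /val_inj; apply: perm_inj.
- by rewrite /word size_map size_enum_ord.
move=> v; apply/mapP/idP => [[i _ ->]|lt_vn]; first exact: ltn_ord.
by exists ((s^-1)%g (Ordinal lt_vn)); rewrite ?mem_enum ?permKV.
Qed.

Lemma nth_word n (s : 'S_n) (i : 'I_n) : nth 0 (word s) i = s i.
Proof. by rewrite /word (nth_map i) ?size_enum_ord ?nth_ord_enum. Qed.

Lemma word_inj n : injective (@word n).
Proof.
move=> s1 s2 eq_word; apply/permP => i; apply: val_inj.
by have := congr1 (fun w => nth 0 w i) eq_word; rewrite /= !nth_word.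
Qed.

Lemma word_surj n w : perm_word n w -> exists s : 'S_n, word s = w.
Proof.
case=> w_uniq size_w mem_w.
have lt_n (i : 'I_n) : nth 0 w i < n by rewrite -mem_w mem_nth ?size_w.
have f_inj : injective (fun i => Ordinal (lt_n i)).
  by move=> i j /(congr1 val) /eqP; rewrite /= nth_uniq ?size_w // => /eqP /val_inj.
exists (perm f_inj); rewrite /word (eq_map (g := fun i => nth 0 w (val i))).
  by rewrite (map_comp (nth 0 w) val) val_enum_ord -size_w -/(mkseq _ _) mkseq_nth.
by move=> i; rewrite permE.
Qed.

Lemma RC_word n (s : 'S_n) :
  RC s = comp_of_des n [seq i <- iota 1 n.-1 | recoil (word s) i].
Proof. by []. Qed.

Theorem mainTheorem3 (n : nat) (J : seq nat) :
  0 < n -> is_comp n J ->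
  Mcoef n J J = 1 /\
  (forall I : seq nat, is_comp n I -> I != J -> Mcoef n I J != 0 -> compLt I J).
Proof.
move=> n_gt0 J_comp; set K := compl_comp n J.
have K_comp : is_comp n K := compl_comp_is_comp J n_gt0.
split; last first.
  move=> I _ neq_IJ; rewrite /Mcoef cards_eq0 => /set0Pn[s]; rewrite inE RC_word.
  case/andP=> /andP[_ s_sail] /eqP RC_s; rewrite -RC_s in neq_IJ *.
  exact: comp_of_recoils_compLt (perm_word_word s) s_sail neq_IJ.
have [s0 word_s0] : exists s0 : 'S_n, word s0 = runs_word 0 K.
  by apply: word_surj; case/andP: K_comp => _ /eqP {1}<-; apply: perm_word_runs_word.
have s0_sail : saillance_fact (reshape K (word s0)).
  by rewrite word_s0 reshape_runs_word saillance_decreasing_runs //; case/andP: K_comp.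
have s0_recoils : [seq i <- iota 1 n.-1 | recoil (word s0) i] = Des J.
  by rewrite word_s0 recoils_runs_word_compl_comp.
rewrite /Mcoef -(cards1 s0); congr #|pred_of_set _|; apply/setP => s.
rewrite !inE /SC_is K_comp RC_word /=; apply/andP/eqP => [[s_sail /eqP RC_s]|->].
  have s_recoils : [seq i <- iota 1 n.-1 | recoil (word s) i] = Des J.
    by rewrite -RC_s Des_comp_of_des ?path_filter_iota1.
  apply: word_inj; apply: (saillance_word_unique n_gt0 J_comp) => //;
    exact: perm_word_word.
by rewrite s0_sail s0_recoils comp_of_desK.
Qed.
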